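(* Let $M\in\mathbb C\setminus\{0\}$ and $y\in\mathbb C$, and set $\rho(a)=\begin{bmatrix} M&1\\0&M^{-1}\end{bmatrix}$, $\rho(b)=\begin{bmatrix} M&0\\2-y&M^{-1}\end{bmatrix}$, extended multiplicatively to words in $a^{\pm1},b^{\pm1}$. Let $I$ be the $2\times2$ identity matrix. (1) If $m\ge1$ and $w=(ba^{-1})^m(b^{-1}a)^m$, then $$\rho(w)=I-S_m(y)S_{m-1}(y)\begin{bmatrix} y-2& M-M^{-1}\\ (M-M^{-1})(2-y) & 2-y\end{bmatrix}+S_{m-1}^2(y)\begin{bmatrix} (y-2)(y-M^2) & -(M^{-1}y-M-M^{-1})\\ (y-2)(M^{-1}y-M-M^{-1}) & M^{-2}(2-y)\end{bmatrix}.$$ (2) If $m\ge0$ and $w=(ba^{-1})^m\,ba\,(b^{-1}a)^m$, then $$\rho(w)=I-S_m(y)S_{m-1}(y)\begin{bmatrix} 2M^2-y & M+M^{-1}\\ (M+M^{-1})(2-y) & 2M^{-2}-y\end{bmatrix}+S_m^2(y)\begin{bmatrix} M^2-1 & M\\ M(2-y) & -y+1+M^{-2}\end{bmatrix}+S_{m-1}^2(y)\begin{bmatrix} -y+1+M^2 & M^{-1}\\ M^{-1}(2-y) & M^{-2}-1\end{bmatrix}.$$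
   Context: $S_l(v)$, $l\in\mathbb Z$, are the Chebyshev polynomials of the second kind: $S_0(v)=1$, $S_1(v)=v$, and $S_l(v)=vS_{l-1}(v)-S_{l-2}(v)$ for all integers $l$ (so e.g. $S_{-1}=0$). *)

From mathcomp Require Import all_boot all_algebra.
From mathcomp Require Import complex reals.
Set Implicit Arguments. Unset Strict Implicit. Unset Printing Implicit Defensive.
Import GRing.Theory.
Local Open Scope ring_scope.

Fixpoint chebS_nat {F : ringType} (n : nat) (v : F) : F :=
  match n with
  | 0%N => 1
  | 1%N => v
  | (n'.+1 as k).+1 => v * chebS_nat k v - chebS_nat n' v
  end.

(* Extension to all integers l via the same recursion:
   S_{-1} = 0 and S_{-(n+2)} = - S_n. *)
Definition chebS {F : ringType} (l : int) (v : F) : F :=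
  match l with
  | Posz n => chebS_nat n v
  | Negz 0 => 0
  | Negz n'.+1 => - chebS_nat n' v
  end.

Definition mx2 {F : ringType} (a b c d : F) : 'M[F]_2 :=
  \matrix_(i < 2, j < 2)
    if i == 0 then (if j == 0 then a else b) else (if j == 0 then c else d).

Inductive letter := La | LaI | Lb | LbI.

Section Rho.
Variable R : realType.
Local Notation C := (R[i]).

Definition rho_a (M : C) : 'M[C]_2 := mx2 M 1 0 M^-1.
Definition rho_b (M y : C) : 'M[C]_2 := mx2 M 0 (2 - y) M^-1.

Definition rho_letter (M y : C) (x : letter) : 'M[C]_2 :=
  match x with
  | La => rho_a M
  | LaI => invmx (rho_a M)
  | Lb => rho_b M y
  | LbI => invmx (rho_b M y)
  end.

Definition rho (M y : C) (w : seq letter) : 'M[C]_2 :=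
  \prod_(x <- w) rho_letter M y x.
End Rho.

Definition wpow (w : seq letter) (m : nat) : seq letter := flatten (nseq m w).

Definition word1 (m : nat) : seq letter := wpow [:: Lb; LaI] m ++ wpow [:: LbI; La] m.
Definition word2 (m : nat) : seq letter :=
  wpow [:: Lb; LaI] m ++ [:: Lb; La] ++ wpow [:: LbI; La] m.

From mathcomp Require Import all_boot all_algebra.
From mathcomp Require Import complex reals.
From mathcomp Require Import ring zify.
Import GRing.Theory.
Local Open Scope ring_scope.

(* The images X = rho(b a^-1) and Y = rho(b^-1 a) have trace y and determinant 1,
   so by Cayley-Hamilton X^2 = y X - 1 and X^m = S_(m-1)(y) X - S_(m-2)(y), and
   likewise for Y.  Both words are products of such powers (and of rho(b a)).
   After eliminating S_(m-2) = y S_(m-1) - S_m and writing the identity matrix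
   as (S_m^2 - y S_m S_(m-1) + S_(m-1)^2) 1, the entries of both sides agree as
   rational functions of M, y, S_m, S_(m-1).  The first identity holds for m = 0
   too. *)


Section Chebyshev.
Variables (F : comNzRingType) (v : F).

Lemma chebS_rec (l : int) : chebS (l + 1) v = v * chebS l v - chebS (l - 1) v.
Proof.
case: l => n.
- rewrite -PoszD addn1; case: n => [|n]; first by rewrite /= mulr1 subr0.
  by have -> : n.+1%:Z - 1 = n by lia.
- have -> : Negz n + 1 = - n%:Z by lia.
  have -> : Negz n - 1 = Negz n.+1 by lia.
  by case: n => [|[|n]] /=; ring.
Qed.

Lemma chebS_sub2 (l : int) : chebS (l - 2) v = v * chebS (l - 1) v - chebS l v.
Proof.
have := chebS_rec (l - 1); rewrite subrK.
have -> : l - 1 - 1 = l - 2 by lia.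
by move=> ->; ring.
Qed.

Lemma chebS_Cassini (n : nat) :
  chebS n v ^+ 2 - v * chebS n v * chebS (n%:Z - 1) v + chebS (n%:Z - 1) v ^+ 2 = 1.
Proof.
elim: n => [|n IHn]; first by rewrite /=; ring.
have -> : n.+1%:Z = n%:Z + 1 by lia.
by rewrite addrK chebS_rec -IHn; ring.
Qed.

Lemma expr_chebS (aT : lalgType F) (A : aT) (n : nat) :
  A ^+ 2 = v *: A - 1 -> A ^+ n = chebS (n%:Z - 1) v *: A - (chebS (n%:Z - 2) v)%:A.
Proof.
move=> A2; elim: n => [|n IHn].
  by rewrite /= scale0r sub0r scaleN1r opprK expr0.
rewrite exprSr IHn mulrBl -!scalerAl mul1r -expr2 A2 scalerBr scalerA addrAC -scalerBl.
have -> : n.+1%:Z - 2 = n%:Z - 1 by lia.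
have -> : n%:Z - 2 = (n%:Z - 1) - 1 by lia.
have -> : n.+1%:Z - 1 = (n%:Z - 1) + 1 by lia.
by rewrite chebS_rec mulrC.
Qed.

End Chebyshev.

Section Mx2.
Variable F : comNzRingType.
Implicit Types a b c d k : F.

Lemma mx2_mul a b c d a' b' c' d' :
  mx2 a b c d * mx2 a' b' c' d' =
    mx2 (a * a' + b * c') (a * b' + b * d') (c * a' + d * c') (c * b' + d * d').
Proof.
apply/matrixP=> i j; rewrite !mxE !big_ord_recl big_ord0 !mxE.
by case: i j => [[|[|i]] Hi] [[|[|j]] Hj] //=; rewrite addr0.
Qed.

Lemma mx2_add a b c d a' b' c' d' :
  mx2 a b c d + mx2 a' b' c' d' = mx2 (a + a') (b + b') (c + c') (d + d').
Proof. by apply/matrixP=> i j; rewrite !mxE; case: i j => [[|[|i]] Hi] [[|[|j]] Hj]. Qed.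

Lemma mx2_opp a b c d : - mx2 a b c d = mx2 (- a) (- b) (- c) (- d).
Proof. by apply/matrixP=> i j; rewrite !mxE; case: i j => [[|[|i]] Hi] [[|[|j]] Hj]. Qed.

Lemma mx2_scale k a b c d : k *: mx2 a b c d = mx2 (k * a) (k * b) (k * c) (k * d).
Proof. by apply/matrixP=> i j; rewrite !mxE; case: i j => [[|[|i]] Hi] [[|[|j]] Hj]. Qed.

Lemma mx2_one : 1 = mx2 1 0 0 1 :> 'M[F]_2.
Proof. by apply/matrixP=> i j; rewrite !mxE; case: i j => [[|[|i]] Hi] [[|[|j]] Hj]. Qed.

Definition mx2E := (mx2_mul, mx2_add, mx2_opp, mx2_scale, mx2_one).

Lemma mx2_Cayley_Hamilton a b c d :
  mx2 a b c d ^+ 2 = (a + d) *: mx2 a b c d - (a * d - b * c)%:A.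
Proof. by rewrite expr2 !mx2E; congr mx2; ring. Qed.

End Mx2.

Lemma invmx_mx2_det1 (F : comUnitRingType) (a b c d : F) :
  a * d - b * c = 1 -> invmx (mx2 a b c d) = mx2 d (- b) (- c) a.
Proof.
move=> det1; have AB : mx2 a b c d * mx2 d (- b) (- c) a = 1.
  by rewrite !mx2E -det1; congr mx2; ring.
have [uA _] := mulmx1_unit AB.
by rewrite -[LHS]mulmx1 -[1%:M]AB mulmxA mulVmx // mul1mx.
Qed.

Lemma mx2_expr_chebS (F : comNzRingType) (a b c d t : F) (n : nat) :
  a + d = t -> a * d - b * c = 1 ->
  mx2 a b c d ^+ n = chebS (n%:Z - 1) t *: mx2 a b c d - (chebS (n%:Z - 2) t)%:A.
Proof. by move=> <- det1; apply: expr_chebS; rewrite mx2_Cayley_Hamilton det1 scale1r. Qed.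

Section Rho.
Variables (R : realType) (M y : R[i]).

Lemma rho_cat s t : rho M y (s ++ t) = rho M y s * rho M y t.
Proof. by rewrite /rho big_cat. Qed.

Lemma rho_wpow w m : rho M y (wpow w m) = rho M y w ^+ m.
Proof.
elim: m => [|m IHm]; first by rewrite /rho big_nil expr0.
by rewrite /wpow /= rho_cat -/(wpow w m) IHm exprS.
Qed.

Lemma rho_pair x z : rho M y [:: x; z] = rho_letter M y x * rho_letter M y z.
Proof. by rewrite /rho !big_cons big_nil mulr1. Qed.

Hypothesis M_neq0 : M != 0.

Lemma invmx_rho_a : invmx (rho_a M) = mx2 M^-1 (-1) 0 M.
Proof. by rewrite invmx_mx2_det1 ?oppr0 // mulfV // mulr0 subr0. Qed.

Lemma invmx_rho_b : invmx (rho_b M y) = mx2 M^-1 0 (y - 2) M.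
Proof. by rewrite invmx_mx2_det1 ?oppr0 ?opprB // mulfV // mul0r subr0. Qed.

Lemma rho_ba_inv_wpow m :
  rho M y (wpow [:: Lb; LaI] m) =
    chebS (m%:Z - 1) y *: mx2 1 (- M) ((2 - y) / M) (y - 1) - (chebS (m%:Z - 2) y)%:A.
Proof.
rewrite rho_wpow; have -> : rho M y [:: Lb; LaI] = mx2 1 (- M) ((2 - y) / M) (y - 1).
  by rewrite rho_pair /= invmx_rho_a !mx2E; congr mx2; field.
by apply: mx2_expr_chebS; field.
Qed.

Lemma rho_b_inv_a_wpow m :
  rho M y (wpow [:: LbI; La] m) =
    chebS (m%:Z - 1) y *: mx2 1 M^-1 ((y - 2) * M) (y - 1) - (chebS (m%:Z - 2) y)%:A.
Proof.
rewrite rho_wpow; have -> : rho M y [:: LbI; La] = mx2 1 M^-1 ((y - 2) * M) (y - 1).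
  by rewrite rho_pair /= invmx_rho_b !mx2E; congr mx2; field.
by apply: mx2_expr_chebS; field.
Qed.

End Rho.

Theorem proposition3p3 (R : realType) (M y : R[i]) (hM : M != 0) :
  (forall m : nat, (1 <= m)%N ->
     rho M y (word1 m) =
       1 - (chebS m y * chebS (m%:Z - 1) y) *:
             mx2 (y - 2) (M - M^-1) ((M - M^-1) * (2 - y)) (2 - y)
         + (chebS (m%:Z - 1) y) ^+ 2 *:
             mx2 ((y - 2) * (y - M ^+ 2)) (- (M^-1 * y - M - M^-1))
                 ((y - 2) * (M^-1 * y - M - M^-1)) (M ^- 2 * (2 - y)))
  /\
  (forall m : nat,
     rho M y (word2 m) =
       1 - (chebS m y * chebS (m%:Z - 1) y) *:
             mx2 (2 * M ^+ 2 - y) (M + M^-1) ((M + M^-1) * (2 - y)) (2 * M ^- 2 - y)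
         + (chebS m y) ^+ 2 *:
             mx2 (M ^+ 2 - 1) M (M * (2 - y)) (- y + 1 + M ^- 2)
         + (chebS (m%:Z - 1) y) ^+ 2 *:
             mx2 (- y + 1 + M ^+ 2) M^-1 (M^-1 * (2 - y)) (M ^- 2 - 1)).
Proof.
have one_Cassini (m : nat) : 1 = (chebS m y ^+ 2 - y * chebS m y * chebS (m%:Z - 1) y
                                 + chebS (m%:Z - 1) y ^+ 2) *: (1 : 'M[R[i]]_2).
  by rewrite chebS_Cassini scale1r.
split=> [m _|m].
- rewrite /word1 rho_cat rho_ba_inv_wpow // rho_b_inv_a_wpow // chebS_sub2.
  rewrite [in RHS](one_Cassini m).
  move: (chebS m y) (chebS (m%:Z - 1) y) => s t.
  by rewrite !mx2E; congr mx2; field.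
- rewrite /word2 !rho_cat rho_ba_inv_wpow // rho_b_inv_a_wpow // rho_pair chebS_sub2.
  rewrite [in RHS](one_Cassini m) /=.
  move: (chebS m y) (chebS (m%:Z - 1) y) => s t.
  by rewrite !mx2E; congr mx2; field.
Qed.
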